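(* Let $m\ge 2$ be an integer and let $T_m$ be the $m$-th Chebyshev polynomial, viewed as a map $T_m:\mathbb{Z}_2\to\mathbb{Z}_2$. (i) If $m$ is even, then $1$ is an attracting fixed point of $T_m$, and every $x\in\mathbb{Z}_2$ lies in its attracting basin, i.e. $\lim_{k\to\infty}T_m^{k}(x)=1$ for all $x\in\mathbb{Z}_2$. (ii) If $m$ is odd, let $s=s(m)\ge 2$ be as defined in the context. Then $\mathbb{Z}_2$ decomposes as the disjoint union $$\mathbb{Z}_2=\{0,1,-1\}\sqcup E_1\sqcup E_2\sqcup E_3,$$ where $$E_1=\bigsqcup_{n\ge1}\bigsqcup_{0\le i<2^{s-1}}E_1(n,i),\qquad E_2=\bigsqcup_{n\ge2}\bigsqcup_{0\le i<2^{s}}E_2(n,i),\qquad E_3=\bigsqcup_{n\ge2}\bigsqcup_{0\le i<2^{s}}E_3(n,i),$$ with $$E_1(n,i)=2^n(1+2i)+2^{n+s}\mathbb{Z}_2\ (n\ge1,\ 0\le i<2^{s-1}),$$ $$E_2(n,i)=1+2^n(1+2i)+2^{n+s+1}\mathbb{Z}_2\ (n\ge2,\ 0\le i<2^{s}),$$ $$E_3(n,i)=-1+2^n(1+2i)+2^{n+s+1}\mathbb{Z}_2\ (n\ge2,\ 0\le i<2^{s}).$$ The points $0,1,-1$ are fixed points of $T_m$, and each set $E_1(n,i)$, $E_2(n,i)$, $E_3(n,i)$ is invariant under $T_m$ and the restriction of $T_m$ to it is minimal (every orbit in it is dense in it).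
   Context: $\mathbb{Z}_2$ denotes the ring of $2$-adic integers. For an integer $m\ge0$, the $m$-th Chebyshev polynomial is $$T_m(x)=\sum_{k=0}^{\lfloor m/2\rfloor}(-1)^k\frac{m}{m-k}\binom{m-k}{k}2^{m-2k-1}x^{m-2k}.$$ For an odd integer $m\ge3$, define $s(m)=\max\{n\ge2:\ 2^n\mid(m+1)\text{ or }2^n\mid(m-1)\}$; equivalently, $m=2^{s}q+1$ or $m=2^{s}q-1$ with $q\ge1$ odd and $s=s(m)\ge 2$. $T_m^k$ denotes the $k$-th iterate of $T_m$. A continuous map $f:E\to E$ is minimal if every orbit is dense in $E$. *)

(* 2-adic integers modelled as the inverse limit of Z/2^nZ. *)
From Stdlib Require Import ZArith List Arith Lia.
Open Scope Z_scope.

Definition pw (n : nat) : Z := 2 ^ Z.of_nat n.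

Definition Z2 := nat -> Z.
Definition is_Z2 (x : Z2) : Prop :=
  forall n : nat, 0 <= x n < pw n /\ x (S n) mod pw n = x n.

Definition Z2eq (x y : Z2) : Prop := forall n : nat, x n = y n.

Definition Z2c (z : Z) : Z2 := fun n => z mod pw n.
Definition Z2add (x y : Z2) : Z2 := fun n => (x n + y n) mod pw n.
Definition Z2mul (x y : Z2) : Z2 := fun n => (x n * y n) mod pw n.
Fixpoint Z2pow (x : Z2) (k : nat) : Z2 :=
  match k with O => Z2c 1 | S k' => Z2mul x (Z2pow x k') end.

Fixpoint binom (n k : nat) : nat :=
  match n, k with
  | _, O => 1%nat
  | O, S _ => 0%nat
  | S n', S k' => (binom n' k' + binom n' (S k'))%nat
  end.

(* coefficient (-1)^k * m/(m-k) * C(m-k,k) * 2^(m-2k-1), computed as an exact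
   integer quotient (m * C(m-k,k) * 2^(m-2k)) / (2 (m-k)). *)
Definition cheb_coef (m k : nat) : Z :=
  (-1) ^ Z.of_nat k *
  ((Z.of_nat m * Z.of_nat (binom (m - k) k) * pw (m - 2 * k))
     / (2 * Z.of_nat (m - k))).

Definition cheb (m : nat) (x : Z2) : Z2 :=
  fold_right (fun k acc => Z2add (Z2mul (Z2c (cheb_coef m k)) (Z2pow x (m - 2 * k))) acc)
             (Z2c 0) (seq 0 (S (Nat.div2 m))).

Definition cheb_deriv_at (m : nat) (z : Z) : Z :=
  fold_right (fun k acc => cheb_coef m k * Z.of_nat (m - 2 * k) * z ^ Z.of_nat (m - 2 * k - 1) + acc)
             0 (seq 0 (S (Nat.div2 m))).

Definition iter (k : nat) (f : Z2 -> Z2) (x : Z2) : Z2 := Nat.iter k f x.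

Definition in_coset (a : Z) (N : nat) (x : Z2) : Prop :=
  exists y : Z2, is_Z2 y /\ Z2eq x (Z2add (Z2c a) (Z2mul (Z2c (pw N)) y)).

Definition is_s (m s : nat) : Prop :=
  (2 <= s)%nat /\
  ((pw s | Z.of_nat m + 1) \/ (pw s | Z.of_nat m - 1)) /\
  (forall n : nat, (2 <= n)%nat ->
     ((pw n | Z.of_nat m + 1) \/ (pw n | Z.of_nat m - 1)) -> (n <= s)%nat).

Inductive piece : Type :=
| Pt0 | Pt1 | PtM1
| E1 (n i : nat) | E2 (n i : nat) | E3 (n i : nat).

Definition piece_valid (s : nat) (p : piece) : Prop :=
  match p with
  | Pt0 | Pt1 | PtM1 => True
  | E1 n i => (1 <= n)%nat /\ (i < 2 ^ (s - 1))%nat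
  | E2 n i => (2 <= n)%nat /\ (i < 2 ^ s)%nat
  | E3 n i => (2 <= n)%nat /\ (i < 2 ^ s)%nat
  end.

Definition in_piece (s : nat) (p : piece) (x : Z2) : Prop :=
  match p with
  | Pt0 => Z2eq x (Z2c 0)
  | Pt1 => Z2eq x (Z2c 1)
  | PtM1 => Z2eq x (Z2c (-1))
  | E1 n i => in_coset (pw n * (1 + 2 * Z.of_nat i)) (n + s) x
  | E2 n i => in_coset (1 + pw n * (1 + 2 * Z.of_nat i)) (n + s + 1) x
  | E3 n i => in_coset (-1 + pw n * (1 + 2 * Z.of_nat i)) (n + s + 1) x
  end.

(* f maps E into E and every orbit of a point of E is dense in E
   (density in the 2-adic topology: approximation modulo every 2^N). *)
Definition invariant (f : Z2 -> Z2) (E : Z2 -> Prop) : Prop :=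
  forall x, is_Z2 x -> E x -> E (f x).
Definition minimal_on (f : Z2 -> Z2) (E : Z2 -> Prop) : Prop :=
  forall x y, is_Z2 x -> is_Z2 y -> E x -> E y ->
    forall N : nat, exists k : nat, iter k f x N = y N.

Definition converges_to (f : Z2 -> Z2) (x a : Z2) : Prop :=
  forall N : nat, exists K : nat, forall k : nat, (K <= k)%nat -> iter k f x N = a N.

(* For odd m the recurrence of (T_k, U_(k-1)) gives T_m(x) - x = 2^s x (x^2 - 1) * odd and
   T_m' = m U_(m-1) = 1 mod 4.  On each coset a + 2^K Z_2 of the decomposition the
   displacement T_m(a) - a therefore has valuation exactly K, so in the coordinate
   x = a + 2^K t the map becomes g(t) = odd + (1 + 4l) t mod 8 with g' = 1 mod 4.
   For such g, g^(2^N)(t) - t has valuation exactly N, so g permutes Z/2^N cyclically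
   for every N, which is minimality.  For even m, T_m takes odd values, T_m(1) = 1 and
   T_m'(1) = m^2 = 0 mod 4, whence T_m^k(x) = 1 mod 2^k. *)

From Pilot Require Import Defs.
From Stdlib Require Import ZArith Znumtheory List Arith Lia Classical.
Open Scope Z_scope.

Lemma pw_pos n : 0 < pw n.
Proof. unfold pw. apply Z.pow_pos_nonneg; lia. Qed.

Lemma pw_neq0 n : pw n <> 0.
Proof. pose proof (pw_pos n). lia. Qed.

Lemma pw_add a b : pw (a + b) = pw a * pw b.
Proof. unfold pw. rewrite Nat2Z.inj_add. apply Z.pow_add_r; lia. Qed.

Lemma pw_S n : pw (S n) = 2 * pw n.
Proof. unfold pw. rewrite Nat2Z.inj_succ, Z.pow_succ_r; lia. Qed.

Lemma pw_pred n : (1 <= n)%nat -> pw n = 2 * pw (n - 1).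
Proof. intros H. rewrite <- pw_S. f_equal. lia. Qed.

Lemma Z_of_nat_pow2 n : Z.of_nat (2 ^ n) = pw n.
Proof. unfold pw. rewrite Nat2Z.inj_pow. reflexivity. Qed.

Lemma pw_divide a b : (a <= b)%nat -> (pw a | pw b).
Proof.
  intros H. replace b with (a + (b - a))%nat by lia. rewrite pw_add.
  exists (pw (b - a)). ring.
Qed.

Lemma mod_pw_pw a j n : (j <= n)%nat -> (a mod pw n) mod pw j = a mod pw j.
Proof. intros H. apply Z.mod_mod_divide, pw_divide, H. Qed.

Lemma mod_eq_of_divide p a b : (p | a - b) -> a mod p = b mod p.
Proof. intros [c Hc]. replace a with (b + c * p) by lia. apply Z_mod_plus_full. Qed.

Lemma divide_of_mod_eq p a b : p <> 0 -> a mod p = b mod p -> (p | a - b).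
Proof.
  intros Hp H. rewrite (Z.div_mod a p Hp), (Z.div_mod b p Hp), H.
  exists (a / p - b / p). ring.
Qed.

Lemma divide_mod_sub p a : p <> 0 -> (p | a mod p - a).
Proof. intros Hp. apply divide_of_mod_eq; auto. apply Z.mod_mod, Hp. Qed.

(** * Maps of Z with a formal derivative *)

(* [df] is a formal derivative of [f]; every integer polynomial has one. *)
Definition taylor (f df : Z -> Z) : Prop :=
  forall x h, exists r, f (x + h) = f x + h * df x + h * h * r.

Lemma taylor_divide f df : taylor f df -> forall x y, (y - x | f y - f x).
Proof.
  intros H x y. destruct (H x (y - x)) as [r Hr].
  replace (x + (y - x)) with y in Hr by ring.
  exists (df x + (y - x) * r). rewrite Hr. ring.
Qed.

Lemma taylor_cong f df : taylor f df -> forall p x y, (p | y - x) -> (p | f y - f x).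
Proof. intros Hf p x y H. eapply Z.divide_trans; [exact H | apply (taylor_divide f df Hf)]. Qed.

Lemma taylor_ext f df f' df' :
  (forall x, f x = f' x) -> (forall x, df x = df' x) -> taylor f df -> taylor f' df'.
Proof. intros E1 E2 H x h. destruct (H x h) as [r Hr]. exists r. rewrite <- !E1, <- E2. exact Hr. Qed.

Lemma taylor_id : taylor (fun x => x) (fun _ => 1).
Proof. intros x h. exists 0. ring. Qed.

Lemma taylor_const c : taylor (fun _ => c) (fun _ => 0).
Proof. intros x h. exists 0. ring. Qed.

Lemma taylor_add f df g dg : taylor f df -> taylor g dg ->
  taylor (fun x => f x + g x) (fun x => df x + dg x).
Proof.
  intros Hf Hg x h. destruct (Hf x h) as [r1 H1], (Hg x h) as [r2 H2].
  exists (r1 + r2). rewrite H1, H2. ring.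
Qed.

Lemma taylor_mul f df g dg : taylor f df -> taylor g dg ->
  taylor (fun x => f x * g x) (fun x => df x * g x + f x * dg x).
Proof.
  intros Hf Hg x h. destruct (Hf x h) as [r1 H1], (Hg x h) as [r2 H2].
  exists (r1 * g x + f x * r2 + df x * dg x + h * (df x * r2 + r1 * dg x) + h * h * r1 * r2).
  rewrite H1, H2. ring.
Qed.

Lemma taylor_comp f df u du : taylor f df -> taylor u du ->
  taylor (fun x => f (u x)) (fun x => df (u x) * du x).
Proof.
  intros Hf Hu x h. destruct (Hu x h) as [r1 Hr1].
  destruct (Hf (u x) (h * du x + h * h * r1)) as [r2 Hr2].
  exists (r1 * df (u x) + (du x + h * r1) * (du x + h * r1) * r2).
  replace (u (x + h)) with (u x + (h * du x + h * h * r1)) by (rewrite Hr1; ring).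
  rewrite Hr2. ring.
Qed.

Lemma iter_cong g dg : taylor g dg ->
  forall k p x y, (p | y - x) -> (p | Nat.iter k g y - Nat.iter k g x).
Proof.
  intros Hg k. induction k as [|k IH]; intros p x y H; simpl; auto.
  apply (taylor_cong g dg Hg), IH, H.
Qed.

Definition one_mod4 (d : Z -> Z) : Prop := forall x, exists e, d x = 1 + 4 * e.

Lemma taylor_iter g dg : taylor g dg -> one_mod4 dg ->
  forall k, exists dk, taylor (Nat.iter k g) dk /\ one_mod4 dk.
Proof.
  intros Hg Hd k. induction k as [|k [dk [Hk Hk1]]].
  - exists (fun _ => 1). split; [apply taylor_id | intros x; exists 0; ring].
  - exists (fun x => dg (Nat.iter k g x) * dk x). split.
    + exact (taylor_comp g dg (Nat.iter k g) dk Hg Hk).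
    + intros x. destruct (Hd (Nat.iter k g x)) as [e1 E1], (Hk1 x) as [e2 E2].
      exists (e1 + e2 + 4 * e1 * e2). rewrite E1, E2. ring.
Qed.

(** * A transitivity criterion *)

Section SingleCycle.

Variables (g dg : Z -> Z) (c l : Z).
Hypothesis g_taylor : taylor g dg.
Hypothesis dg_one_mod4 : one_mod4 dg.
Hypothesis g_mod8 : forall t, exists w, g t = (2 * c + 1) + (1 + 4 * l) * t + 8 * w.

(* [g^(2^N) t = t + 2^N * odd]: the orbit of every residue mod 2^N has length exactly 2^N. *)
Definition exact_return (N : nat) : Prop :=
  forall t, exists o, Nat.iter (2 ^ N) g t = t + pw N * (2 * o + 1).

Lemma exact_return_S N : (2 <= N)%nat -> exact_return N -> exact_return (S N).
Proof.
  intros HN HQ t.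
  destruct (taylor_iter g dg g_taylor dg_one_mod4 (2 ^ N)) as [dG [HG HG1]].
  destruct (HQ t) as [o Ho], (HG t (pw N * (2 * o + 1))) as [r Hr], (HG1 t) as [e He].
  replace (2 ^ S N)%nat with (2 ^ N + 2 ^ N)%nat by (simpl; lia).
  rewrite Nat.iter_add, Ho, Hr, Ho, He.
  replace N with (S (S (N - 2))) by lia. rewrite !pw_S.
  exists (o + (2 * o + 1) * e + pw (N - 2) * (2 * o + 1) * (2 * o + 1) * r). ring.
Qed.

Lemma iter_mod8 k t : exists w,
  Nat.iter k g t = Nat.iter k (fun x => (2 * c + 1) + (1 + 4 * l) * x) t + 8 * w.
Proof.
  induction k as [|k [w Hw]].
  - exists 0. rewrite Z.mul_0_r, Z.add_0_r. reflexivity.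
  - rewrite !Nat.iter_succ. rewrite Hw.
    destruct (g_mod8 (Nat.iter k (fun x => 2 * c + 1 + (1 + 4 * l) * x) t + 8 * w)) as [w' Hw'].
    rewrite Hw'. exists ((1 + 4 * l) * w + w'). ring.
Qed.

Lemma exact_return_le2 : exact_return 0 /\ exact_return 1 /\ exact_return 2.
Proof.
  split; [|split]; intros t.
  - destruct (iter_mod8 1 t) as [w Hw]. cbn [Nat.iter nat_rect Nat.pow Nat.mul Nat.add] in Hw |- *. rewrite Hw.
    exists (c + 2 * l * t + 4 * w). change (pw 0) with 1. ring.
  - destruct (iter_mod8 2 t) as [w Hw]. cbn [Nat.iter nat_rect Nat.pow Nat.mul Nat.add] in Hw |- *. rewrite Hw.
    exists (c + l + 2 * c * l + (2 * l + 4 * l * l) * t + 2 * w). change (pw 1) with 2. ring.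
  - destruct (iter_mod8 4 t) as [w Hw]. cbn [Nat.iter nat_rect Nat.pow Nat.mul Nat.add] in Hw |- *. rewrite Hw.
    set (Y := c + l + 2 * c * l).
    set (X := 2 * l + 4 * l * l + Y + 4 * Y * l + 8 * Y * l * l).
    set (W := (l + 2 * l * l) * (1 + 4 * l + 8 * l * l)).
    exists (X + 2 * W * t + w). change (pw 2) with 4. unfold X, Y, W. ring.
Qed.

Lemma exact_return_all N : exact_return N.
Proof.
  destruct exact_return_le2 as [Q0 [Q1 Q2]].
  induction N as [|[|[|N]] IH]; auto.
  apply exact_return_S; auto. lia.
Qed.

Lemma iter_not_cong N t j : (0 < j < 2 ^ N)%nat -> ~ (pw N | Nat.iter j g t - t).
Proof.
  revert t j. induction N as [|N IH]; intros t j Hj Hd; [simpl in Hj; lia|].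
  assert (HP : (pw N | pw (S N))) by (apply pw_divide; lia).
  destruct (Nat.lt_ge_cases j (2 ^ N)) as [Hlt|Hge].
  - apply (IH t j); [lia | eapply Z.divide_trans; eauto].
  - destruct (exact_return_all N t) as [o Ho].
    replace j with (j - 2 ^ N + 2 ^ N)%nat in Hd by lia.
    rewrite Nat.iter_add, Ho in Hd.
    destruct (Nat.eq_dec (j - 2 ^ N) 0) as [Hr0|Hr0].
    + rewrite Hr0 in Hd. cbn [Nat.iter nat_rect] in Hd.
      replace (t + pw N * (2 * o + 1) - t) with (pw N * (2 * o + 1)) in Hd by ring.
      rewrite pw_S in Hd. destruct Hd as [d Hd].
      pose proof (pw_pos N). assert (2 * o + 1 = d * 2) by nia. lia.
    + apply (IH t (j - 2 ^ N)%nat); [simpl in Hj; lia|].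
      set (u := Nat.iter (j - 2 ^ N) g (t + pw N * (2 * o + 1))) in Hd.
      assert (H1 : (pw N | u - Nat.iter (j - 2 ^ N) g t)).
      { apply (iter_cong g dg g_taylor). exists (2 * o + 1). ring. }
      replace (Nat.iter (j - 2 ^ N) g t - t)
        with ((u - t) - (u - Nat.iter (j - 2 ^ N) g t)) by ring.
      apply Z.divide_sub_r; [exact (Z.divide_trans _ _ _ HP Hd) | exact H1].
Qed.

(* The 2^N residues of g^j t, j < 2^N, are distinct, hence exhaust Z/2^N. *)
Lemma iter_transitive_mod N t t' : exists k, (pw N | Nat.iter k g t - t').
Proof.
  pose proof (pw_pos N) as HP.
  set (orbit := map (fun j => Nat.iter j g t mod pw N) (seq 0 (2 ^ N))).
  set (residues := map Z.of_nat (seq 0 (2 ^ N))).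
  assert (Hres : forall z, 0 <= z < pw N -> In z residues).
  { intros z Hz. apply in_map_iff. exists (Z.to_nat z). split; [lia|].
    apply in_seq. rewrite <- Z_of_nat_pow2 in Hz. lia. }
  assert (Hnd : NoDup orbit).
  { apply NoDup_map_NoDup_ForallPairs; [|apply seq_NoDup].
    intros a b Ha Hb Hab. apply in_seq in Ha, Hb.
    assert (Hne : forall i j, (i < j < 2 ^ N)%nat ->
      Nat.iter i g t mod pw N = Nat.iter j g t mod pw N -> False).
    { intros i j Hij E. apply (iter_not_cong N (Nat.iter i g t) (j - i)); [lia|].
      rewrite <- Nat.iter_add. replace (j - i + i)%nat with j by lia.
      apply divide_of_mod_eq; [lia | auto]. }
    destruct (Nat.lt_total a b) as [H|[H|H]];
      [exfalso; apply (Hne a b) | exact H | exfalso; apply (Hne b a)]; auto; lia. }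
  assert (Hinc : incl orbit residues).
  { intros z Hz. apply in_map_iff in Hz. destruct Hz as [j [<- _]].
    apply Hres, Z.mod_pos_bound, HP. }
  assert (Hlen : (length residues <= length orbit)%nat)
    by (unfold orbit, residues; rewrite !length_map; lia).
  destruct (in_map_iff (fun j => Nat.iter j g t mod pw N) (seq 0 (2 ^ N)) (t' mod pw N))
    as [[k [Hk _]] _].
  { apply (NoDup_length_incl Hnd Hlen Hinc), Hres, Z.mod_pos_bound, HP. }
  exists k. apply divide_of_mod_eq; lia.
Qed.

End SingleCycle.

Section CosetDynamics.

Variables (T dT : Z -> Z) (a : Z) (K : nat).
Hypothesis T_taylor : taylor T dT.
Hypothesis dT_one_mod4 : one_mod4 dT.
Hypothesis K_ge3 : (3 <= K)%nat.
Hypothesis T_displacement : exists o, T a - a = pw K * (2 * o + 1).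

Lemma coset_invariant x : (pw K | x - a) -> (pw K | T x - a).
Proof.
  intros Hx. destruct T_displacement as [o Ho].
  replace (T x - a) with ((T x - T a) + (T a - a)) by ring.
  apply Z.divide_add_r; [apply (taylor_cong T dT T_taylor), Hx | rewrite Ho; exists (2 * o + 1); ring].
Qed.

(* [T] on [a + 2^K Z] read in the coordinate [t], where [x = a + 2^K t]. *)
Let rescaled (t : Z) : Z := (T (a + pw K * t) - a) / pw K.

Let rescaled_spec t : T (a + pw K * t) = a + pw K * rescaled t.
Proof.
  unfold rescaled. destruct (coset_invariant (a + pw K * t)) as [d Hd]; [exists t; ring|].
  rewrite Hd, Z.div_mul by apply pw_neq0. lia.
Qed.

Let rescaled_taylor : taylor rescaled (fun t => dT (a + pw K * t)).
Proof.
  intros t h. destruct (T_taylor (a + pw K * t) (pw K * h)) as [r Hr].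
  replace (a + pw K * t + pw K * h) with (a + pw K * (t + h)) in Hr by ring.
  rewrite !rescaled_spec in Hr. exists (pw K * r).
  apply (Z.mul_reg_l _ _ (pw K)); [apply pw_neq0 | nia].
Qed.

(* Since [2^K] is divisible by 8, the Taylor formula at [a] makes [rescaled] affine mod 8. *)
Let rescaled_mod8 : exists c l, forall t, exists w,
  rescaled t = (2 * c + 1) + (1 + 4 * l) * t + 8 * w.
Proof.
  destruct T_displacement as [o Ho], (dT_one_mod4 a) as [e He].
  exists o, e. intros t. destruct (T_taylor a (pw K * t)) as [r Hr].
  rewrite rescaled_spec, He in Hr.
  assert (HK8 : pw K = 8 * pw (K - 3)).
  { replace K with (3 + (K - 3))%nat at 1 by lia. apply pw_add. }
  exists (pw (K - 3) * t * t * r). apply (Z.mul_reg_l _ _ (pw K)); [apply pw_neq0|].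
  rewrite HK8 in *. nia.
Qed.

Lemma coset_transitive X Y L : (pw K | X - a) -> (pw K | Y - a) ->
  exists k, (pw L | Nat.iter k T X - Y).
Proof.
  intros [t Ht] [t' Ht'].
  destruct rescaled_mod8 as [c [l Hmod8]].
  destruct (iter_transitive_mod rescaled _ c l rescaled_taylor (fun t => dT_one_mod4 _) Hmod8 L t t')
    as [k Hk].
  exists k.
  replace X with (a + pw K * t) by lia. replace Y with (a + pw K * t') by lia.
  rewrite <- (Nat.iter_swap_gen _ _ (fun t => a + pw K * t) rescaled T (fun t => eq_sym (rescaled_spec t))).
  replace (a + pw K * Nat.iter k rescaled t - (a + pw K * t'))
    with (pw K * (Nat.iter k rescaled t - t')) by ring.
  apply Z.divide_mul_r, Hk.
Qed.

End CosetDynamics.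

(** * Chebyshev polynomials through their recurrence *)

(* [cheb_TU x k = (T_k(x), U_(k-1)(x))], from
   [T_k + U_(k-1) sqrt(x^2-1) = (x + sqrt(x^2-1))^k]. *)
Fixpoint cheb_TU (x : Z) (k : nat) : Z * Z :=
  match k with
  | O => (1, 0)
  | S k' => let (t, u) := cheb_TU x k' in (x * t + (x * x - 1) * u, t + x * u)
  end.

Definition chebT (k : nat) (x : Z) : Z := fst (cheb_TU x k).
Definition chebU (k : nat) (x : Z) : Z := snd (cheb_TU x k).

Lemma chebT_0 x : chebT 0 x = 1. Proof. reflexivity. Qed.
Lemma chebU_0 x : chebU 0 x = 0. Proof. reflexivity. Qed.

Lemma chebT_S k x : chebT (S k) x = x * chebT k x + (x * x - 1) * chebU k x.
Proof. unfold chebT, chebU. simpl. destruct (cheb_TU x k). reflexivity. Qed.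

Lemma chebU_S k x : chebU (S k) x = chebT k x + x * chebU k x.
Proof. unfold chebT, chebU. simpl. destruct (cheb_TU x k). reflexivity. Qed.

Lemma chebTU_add a b x :
  chebT (a + b) x = chebT a x * chebT b x + (x * x - 1) * chebU a x * chebU b x /\
  chebU (a + b) x = chebT a x * chebU b x + chebU a x * chebT b x.
Proof.
  induction b as [|b [IHT IHU]].
  - rewrite Nat.add_0_r, chebT_0, chebU_0. split; ring.
  - rewrite Nat.add_succ_r, !chebT_S, !chebU_S, IHT, IHU. split; ring.
Qed.

Lemma cheb_pell k x : chebT k x * chebT k x - (x * x - 1) * chebU k x * chebU k x = 1.
Proof.
  induction k as [|k IH]; [rewrite chebT_0, chebU_0; ring|].
  rewrite chebT_S, chebU_S.
  transitivity (chebT k x * chebT k x - (x * x - 1) * chebU k x * chebU k x); [ring | exact IH].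
Qed.

Lemma chebT_double k x : chebT (2 * k) x = 1 + 2 * (x * x - 1) * chebU k x * chebU k x.
Proof.
  replace (2 * k)%nat with (k + k)%nat by lia.
  rewrite (proj1 (chebTU_add k k x)). pose proof (cheb_pell k x). lia.
Qed.

Lemma chebU_double k x : chebU (2 * k) x = 2 * chebT k x * chebU k x.
Proof.
  replace (2 * k)%nat with (k + k)%nat by lia.
  rewrite (proj2 (chebTU_add k k x)). ring.
Qed.

Lemma chebT_SS k x : chebT (S (S k)) x = 2 * x * chebT (S k) x - chebT k x.
Proof. rewrite !chebT_S, !chebU_S. ring. Qed.

Lemma chebT_pred k x : (1 <= k)%nat -> chebT (k - 1) x = x * chebT k x - (x * x - 1) * chebU k x.
Proof.
  intros H. replace k with (S (k - 1)) at 2 3 by lia.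
  rewrite chebT_S, chebU_S. ring.
Qed.

Fixpoint dchebU (k : nat) (x : Z) : Z :=
  match k with
  | O => 0
  | S k' => Z.of_nat k' * chebU k' x + chebU k' x + x * dchebU k' x
  end.

Definition dchebT (k : nat) (x : Z) : Z := Z.of_nat k * chebU k x.

Lemma dchebU_spec k x : (x * x - 1) * dchebU k x = Z.of_nat k * chebT k x - x * chebU k x.
Proof.
  induction k as [|k IH]; cbn [dchebU].
  - rewrite chebT_0, chebU_0. ring.
  - rewrite Nat2Z.inj_succ, chebT_S, chebU_S.
    transitivity ((x * x - 1) * (Z.of_nat k * chebU k x + chebU k x) + x * ((x * x - 1) * dchebU k x));
      [ring | rewrite IH; ring].
Qed.

Lemma taylor_chebTU k : taylor (chebT k) (dchebT k) /\ taylor (chebU k) (dchebU k).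
Proof.
  induction k as [|k [IT IU]].
  - split; intros x h; exists 0; unfold dchebT; cbn [dchebU]; rewrite ?chebT_0, ?chebU_0; ring.
  - split.
    + eapply taylor_ext; [intros x; symmetry; apply chebT_S| |].
      2: { apply taylor_add; apply taylor_mul; [apply taylor_id | exact IT | | exact IU].
           apply (taylor_add _ _ _ _ (taylor_mul _ _ _ _ taylor_id taylor_id) (taylor_const (-1))). }
      intros x. cbv beta. unfold dchebT. rewrite Nat2Z.inj_succ, chebU_S.
      transitivity (chebT k x + (Z.of_nat k + 2) * x * chebU k x + (x * x - 1) * dchebU k x);
        [ring | rewrite dchebU_spec; ring].
    + eapply taylor_ext; [intros x; symmetry; apply chebU_S| |].
      2: { apply taylor_add; [exact IT | apply taylor_mul; [apply taylor_id | exact IU]]. }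
      intros x. cbn [dchebU]. unfold dchebT. ring.
Qed.

Lemma taylor_chebT k : taylor (chebT k) (dchebT k).
Proof. apply taylor_chebTU. Qed.

Lemma chebT_cong k p x y : (p | y - x) -> (p | chebT k y - chebT k x).
Proof. apply (taylor_cong _ _ (taylor_chebT k)). Qed.

Lemma chebU_add4_mod4 k x : exists w, chebU (k + 4) x = chebU k x + 4 * w.
Proof.
  rewrite (proj2 (chebTU_add k 4 x)).
  repeat (rewrite chebT_S || rewrite chebU_S). rewrite chebT_0, chebU_0.
  exists (chebT k x * (2 * x * x * x - x) + chebU k x * (2 * x * x * x * x - 2 * x * x)). ring.
Qed.

Lemma chebU_mod4 j r x : exists w, chebU (4 * j + r) x = chebU r x + 4 * w.
Proof.
  induction j as [|j [w Hw]]; [exists 0; simpl; ring|].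
  replace (4 * S j + r)%nat with ((4 * j + r) + 4)%nat by lia.
  destruct (chebU_add4_mod4 (4 * j + r) x) as [w' Hw']. rewrite Hw', Hw.
  exists (w + w'). ring.
Qed.

Lemma dchebT_one_mod4 m : Nat.odd m = true -> one_mod4 (dchebT m).
Proof.
  intros Hm x. unfold dchebT.
  assert (H : exists j, m = (4 * j + 1)%nat \/ m = (4 * j + 3)%nat).
  { apply Nat.odd_spec in Hm. destruct Hm as [h Hh].
    destruct (Nat.Even_or_Odd h) as [[q Hq]|[q Hq]]; exists q; lia. }
  destruct H as [j [E|E]]; subst m; set (J := Z.of_nat j).
  - destruct (chebU_mod4 j 1 x) as [w Hw]. rewrite Hw.
    repeat (rewrite chebT_S || rewrite chebU_S). rewrite chebT_0, chebU_0.
    exists (J + w + 4 * J * w). replace (Z.of_nat (4 * j + 1)) with (4 * J + 1) by lia. ring.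
  - destruct (chebU_mod4 j 3 x) as [w Hw]. rewrite Hw.
    repeat (rewrite chebT_S || rewrite chebU_S). rewrite chebT_0, chebU_0.
    exists (4 * J * x * x - J + 3 * x * x + (4 * J + 3) * w - 1).
    replace (Z.of_nat (4 * j + 3)) with (4 * J + 3) by lia. ring.
Qed.

Lemma cheb_at1 k : chebT k 1 = 1 /\ chebU k 1 = Z.of_nat k.
Proof.
  induction k as [|k [HT HU]]; [split; reflexivity|].
  rewrite chebT_S, chebU_S, HT, HU. split; lia.
Qed.

Lemma chebT_odd_at0 j : chebT (2 * j + 1) 0 = 0.
Proof.
  induction j as [|j IH]; [reflexivity|].
  replace (2 * S j + 1)%nat with (S (S (2 * j + 1))) by lia.
  rewrite chebT_SS, IH. ring.
Qed.

Lemma chebT_odd_atm1 j : chebT (2 * j + 1) (-1) = -1.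
Proof.
  assert (Hneg : forall k, chebT (S k) (-1) = - chebT k (-1)) by (intros k; rewrite chebT_S; ring).
  induction j as [|j IH]; [reflexivity|].
  replace (2 * S j + 1)%nat with (S (S (2 * j + 1))) by lia.
  rewrite !Hneg, IH. ring.
Qed.

Lemma chebT_even_odd k x : exists a, chebT (2 * k) x = 2 * a + 1.
Proof. rewrite chebT_double. exists ((x * x - 1) * chebU k x * chebU k x). ring. Qed.

Lemma chebU_pow2 e x : (1 <= e)%nat -> exists o, chebU (2 ^ e) x = pw e * x * (2 * o + 1).
Proof.
  intros He. induction e as [|[|e] IH]; [lia| |].
  - exists 0. change (2 ^ 1)%nat with 2%nat.
    rewrite !chebU_S, chebT_S, chebT_0, chebU_0. change (pw 1) with 2. ring.
  - destruct IH as [o Ho]; [lia|].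
    replace (2 ^ S (S e))%nat with (2 * 2 ^ S e)%nat by (simpl; lia).
    rewrite chebU_double, Ho.
    replace (2 ^ S e)%nat with (2 * 2 ^ e)%nat by (simpl; lia).
    destruct (chebT_even_odd (2 ^ e) x) as [a Ha]. rewrite Ha, (pw_S (S e)).
    exists (2 * a * o + a + o). ring.
Qed.

Lemma chebU_mul_even k x q : exists w, chebU (q * (2 * k)) x = chebU (2 * k) x * (Z.of_nat q + 2 * w).
Proof.
  induction q as [|q [w Hw]]; [exists 0; rewrite chebU_0; ring|].
  replace (S q * (2 * k))%nat with (q * (2 * k) + 2 * k)%nat by lia.
  rewrite (proj2 (chebTU_add (q * (2 * k)) (2 * k) x)), Hw.
  replace (q * (2 * k))%nat with (2 * (q * k))%nat by lia.
  destruct (chebT_even_odd (q * k) x) as [a Ha], (chebT_even_odd k x) as [b Hb].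
  rewrite Ha, Hb, Nat2Z.inj_succ.
  exists (a + w * (2 * b + 1) + Z.of_nat q * b). ring.
Qed.

Lemma chebU_pow2_mul_odd e q x : (1 <= e)%nat -> Nat.odd q = true ->
  exists o, chebU (2 ^ e * q) x = pw e * x * (2 * o + 1).
Proof.
  intros He Hq. destruct (chebU_pow2 e x He) as [o Ho].
  destruct (chebU_mul_even (2 ^ (e - 1)) x q) as [w Hw].
  replace (2 * 2 ^ (e - 1))%nat with (2 ^ e)%nat in Hw
    by (destruct e; [lia | simpl; rewrite Nat.sub_0_r; lia]).
  rewrite Nat.mul_comm, Hw, Ho.
  apply Nat.odd_spec in Hq. destruct Hq as [r ->].
  exists (2 * o * Z.of_nat r + o + Z.of_nat r + w * (2 * o + 1)). rewrite Nat2Z.inj_add, Nat2Z.inj_mul. ring.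
Qed.

Lemma chebT_sub_self m s q x : (2 <= s)%nat -> Nat.odd q = true ->
  (m = 2 ^ s * q + 1 \/ m + 1 = 2 ^ s * q)%nat ->
  exists w, chebT m x - x = pw s * x * (x * x - 1) * (2 * w + 1).
Proof.
  intros Hs Hq Hm. destruct s as [|[|s]]; [lia | lia|].
  set (A := (2 ^ S (S s) * q)%nat).
  destruct (chebU_pow2_mul_odd (S s) q x) as [o2 H2]; [lia | exact Hq|].
  destruct (chebU_pow2_mul_odd (S (S s)) q x) as [o1 H1]; [lia | exact Hq|].
  assert (HT : chebT A x = 1 + 2 * (x * x - 1) * chebU (2 ^ S s * q) x * chebU (2 ^ S s * q) x).
  { replace A with (2 * (2 ^ S s * q))%nat by (unfold A; simpl; lia). apply chebT_double. }
  fold A in H1. rewrite H2 in HT. rewrite !pw_S in *.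
  destruct Hm as [Hm|Hm].
  - replace m with (S A) by (unfold A; lia). rewrite chebT_S, HT, H1.
    exists (pw s * x * x * (2 * o2 + 1) * (2 * o2 + 1) + o1). ring.
  - replace m with (A - 1)%nat by (unfold A; lia).
    rewrite chebT_pred, HT, H1 by (unfold A in *; lia).
    exists (pw s * x * x * (2 * o2 + 1) * (2 * o2 + 1) - o1 - 1). ring.
Qed.

Lemma is_s_cofactor m s : is_s m s ->
  exists q, Nat.odd q = true /\ (m = 2 ^ s * q + 1 \/ m + 1 = 2 ^ s * q)%nat.
Proof.
  intros [Hs [Hd Hmax]].
  assert (H4 : 4 <= pw s).
  { replace s with (2 + (s - 2))%nat by lia. rewrite pw_add. pose proof (pw_pos (s - 2)).
    change (pw 2) with 4. lia. }
  assert (Hodd : forall c e, Z.of_nat m + e = c * pw s -> (e = 1 \/ e = -1) ->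
    exists q, Nat.odd q = true /\ Z.of_nat m + e = Z.of_nat (2 ^ s * q)).
  { intros c e Hc He. destruct (Z.Even_or_Odd c) as [[c' Hc']|[c' Hc']].
    - exfalso. assert (S s <= s)%nat; [|lia]. apply Hmax; [lia|].
      destruct He; subst e; [left | right]; exists c'; rewrite pw_S; lia.
    - exists (Z.to_nat c). assert (0 <= c') by nia. split.
      + apply Nat.odd_spec. exists (Z.to_nat c'). lia.
      + rewrite Nat2Z.inj_mul, Z_of_nat_pow2, Z2Nat.id by lia. lia. }
  destruct Hd as [[c Hc]|[c Hc]].
  - destruct (Hodd c 1) as [q [Hq E]]; [lia | auto |]. exists q. split; [exact Hq | lia].
  - destruct (Hodd c (-1)) as [q [Hq E]]; [lia | auto |]. exists q. split; [exact Hq | lia].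
Qed.

(** * The explicit coefficients *)

Fixpoint sumZ (f : nat -> Z) (n : nat) : Z :=
  match n with O => 0 | S n' => f O + sumZ (fun k => f (S k)) n' end.

Lemma sumZ_S f n : sumZ f (S n) = f O + sumZ (fun k => f (S k)) n.
Proof. reflexivity. Qed.

Lemma sumZ_last f n : sumZ f (S n) = sumZ f n + f n.
Proof.
  revert f. induction n as [|n IH]; intros f; [simpl; ring|].
  rewrite sumZ_S, IH. simpl. ring.
Qed.

Lemma sumZ_ext f g n : (forall k, (k < n)%nat -> f k = g k) -> sumZ f n = sumZ g n.
Proof.
  revert f g. induction n as [|n IH]; intros f g H; [reflexivity|].
  simpl. rewrite H by lia. f_equal. apply IH. intros. apply H. lia.
Qed.

Lemma sumZ_add f g n : sumZ (fun k => f k + g k) n = sumZ f n + sumZ g n.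
Proof. revert f g. induction n as [|n IH]; intros; simpl; [ring | rewrite IH; ring]. Qed.

Lemma sumZ_scal c f n : sumZ (fun k => c * f k) n = c * sumZ f n.
Proof. revert f. induction n as [|n IH]; intros; simpl; [ring | rewrite IH; ring]. Qed.

Lemma sumZ_pad f n j : (forall k, (n <= k)%nat -> f k = 0) -> sumZ f (n + j) = sumZ f n.
Proof.
  intros H. induction j as [|j IH]; [rewrite Nat.add_0_r; reflexivity|].
  rewrite Nat.add_succ_r, sumZ_last, IH, H by lia. ring.
Qed.

Lemma fold_seq_sumZ f a n :
  fold_right (fun k acc => f k + acc) 0 (seq a n) = sumZ (fun k => f (a + k)%nat) n.
Proof.
  revert a. induction n as [|n IH]; intros a; [reflexivity|].
  simpl. rewrite IH, Nat.add_0_r. f_equal.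
  apply sumZ_ext. intros. f_equal. lia.
Qed.

Lemma binom_0_r n : binom n 0 = 1%nat.
Proof. destruct n; reflexivity. Qed.

Lemma binom_small n k : (n < k)%nat -> binom n k = 0%nat.
Proof.
  revert k. induction n as [|n IH]; intros k H; destruct k; try lia; [reflexivity|].
  simpl. rewrite !IH by lia. reflexivity.
Qed.

Lemma binom_diag n : binom n n = 1%nat.
Proof. induction n as [|n IH]; [reflexivity|]. simpl. rewrite IH, binom_small by lia. reflexivity. Qed.

Lemma binom_absorb n k : (S k * binom (S n) (S k) = S n * binom n k)%nat.
Proof.
  revert k. induction n as [|n IH]; intros k.
  - destruct k; [reflexivity|]. rewrite !binom_small by lia. lia.
  - change (binom (S (S n)) (S k)) with (binom (S n) k + binom (S n) (S k))%nat.
    destruct k as [|k].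
    + rewrite binom_0_r. specialize (IH 0%nat). rewrite binom_0_r in IH. lia.
    + pose proof (IH k) as H1. pose proof (IH (S k)) as H2.
      change (binom (S n) (S ?j)) with (binom n j + binom n (S j))%nat in *.
      rewrite Nat.mul_add_distr_l, H2.
      replace (S (S k) * (binom n k + binom n (S k)))%nat
        with (S k * (binom n k + binom n (S k)) + (binom n k + binom n (S k)))%nat by ring.
      rewrite H1. ring.
Qed.

(* [lucas_coef N k = C(N,k) + C(N-1,k-1)]; for [N = m - k] this is [m/(m-k) C(m-k,k)]. *)
Definition lucas_coef (N k : nat) : nat :=
  (binom N k + match k with O => O | S k' => binom (N - 1) k' end)%nat.

Definition lucas_term (m k : nat) : nat := if (2 * k <=? m)%nat then lucas_coef (m - k) k else O.

Definition sgn (k : nat) : Z := (-1) ^ Z.of_nat k.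

Lemma sgn_S k : sgn (S k) = - sgn k.
Proof. unfold sgn. rewrite Nat2Z.inj_succ, Z.pow_succ_r by lia. ring. Qed.

Lemma lucas_coef_S N k : (1 <= N)%nat -> lucas_coef (S N) (S k) = (lucas_coef N (S k) + lucas_coef N k)%nat.
Proof.
  intros H. destruct N as [|n]; [lia|]. unfold lucas_coef.
  replace (S (S n) - 1)%nat with (S n) by lia. replace (S n - 1)%nat with n by lia.
  change (binom (S (S n)) (S k)) with (binom (S n) k + binom (S n) (S k))%nat.
  destruct k as [|k]; [rewrite !binom_0_r; lia|].
  change (binom (S n) (S k)) with (binom n k + binom n (S k))%nat. lia.
Qed.

Lemma lucas_term_small m k : (m < 2 * k)%nat -> lucas_term m k = O.
Proof. intros H. unfold lucas_term. destruct (Nat.leb_spec (2 * k) m); [lia | reflexivity]. Qed.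

Lemma lucas_term_0 m : lucas_term m 0 = 1%nat.
Proof. unfold lucas_term, lucas_coef. simpl. rewrite Nat.sub_0_r, binom_0_r. reflexivity. Qed.

Lemma lucas_term_SS m k : (1 <= m)%nat ->
  lucas_term (m + 2) (S k) = (lucas_term (m + 1) (S k) + lucas_term m k)%nat.
Proof.
  intros Hm. unfold lucas_term.
  destruct (Nat.leb_spec (2 * S k) (m + 2)) as [H1|H1];
  destruct (Nat.leb_spec (2 * k) m) as [H3|H3]; try lia;
  destruct (Nat.leb_spec (2 * S k) (m + 1)) as [H2|H2]; try lia.
  - replace (m + 2 - S k)%nat with (S (m - k)) by lia.
    replace (m + 1 - S k)%nat with (m - k)%nat by lia. apply lucas_coef_S. lia.
  - replace (m + 2 - S k)%nat with (S (m - k)) by lia.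
    rewrite lucas_coef_S by lia. replace m with (2 * k)%nat by lia.
    unfold lucas_coef. replace (2 * k - k)%nat with k by lia.
    rewrite binom_small by lia. destruct k; [lia|].
    replace (S k - 1)%nat with k by lia. rewrite (binom_small k (S k)) by lia. lia.
Qed.

(* [lucas m y = L_m(y)], the Lucas polynomial, with [L_m(2x) = 2 T_m(x)]. *)
Definition lucas (m : nat) (y : Z) : Z :=
  sumZ (fun k => sgn k * Z.of_nat (lucas_term m k) * y ^ Z.of_nat (m - 2 * k)) (S m).

Lemma lucas_SS m y : (1 <= m)%nat -> lucas (m + 2) y = y * lucas (m + 1) y - lucas m y.
Proof.
  intros Hm. unfold lucas.
  replace (S (m + 2)) with (S (S (S m))) by lia. replace (S (m + 1)) with (S (S m)) by lia.
  set (G1 := fun k => sgn k * Z.of_nat (lucas_term (m + 1) (S k)) * y ^ Z.of_nat (m - 2 * k)).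
  set (G2 := fun k => sgn k * Z.of_nat (lucas_term m k) * y ^ Z.of_nat (m - 2 * k)).
  assert (Hdrop : forall G, (forall k, (m < 2 * k)%nat -> G k = 0) -> sumZ G (S (S m)) = sumZ G (S m)).
  { intros G HG. rewrite sumZ_last, HG by lia. ring. }
  assert (A1 : sumZ (fun k => sgn k * Z.of_nat (lucas_term (m + 2) k) * y ^ Z.of_nat (m + 2 - 2 * k))
      (S (S (S m))) = y ^ Z.of_nat (m + 2) - sumZ G1 (S (S m)) - sumZ G2 (S (S m))).
  { rewrite sumZ_S, lucas_term_0, Nat.mul_0_r, Nat.sub_0_r.
    rewrite (sumZ_ext _ (fun k => -1 * G1 k + -1 * G2 k)).
    - rewrite sumZ_add, !sumZ_scal. change (sgn 0) with 1. ring.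
    - intros k _. unfold G1, G2. rewrite sgn_S, lucas_term_SS, Nat2Z.inj_add by lia.
      replace (m + 2 - 2 * S k)%nat with (m - 2 * k)%nat by lia. ring. }
  assert (A2 : y * sumZ (fun k => sgn k * Z.of_nat (lucas_term (m + 1) k) * y ^ Z.of_nat (m + 1 - 2 * k))
      (S (S m)) = y ^ Z.of_nat (m + 2) - sumZ G1 (S m)).
  { rewrite sumZ_S, lucas_term_0, Nat.mul_0_r, Nat.sub_0_r, Z.mul_add_distr_l, <- sumZ_scal.
    rewrite (sumZ_ext _ (fun k => -1 * G1 k)).
    - rewrite sumZ_scal. change (sgn 0) with 1.
      replace (Z.of_nat (m + 2)) with (Z.succ (Z.of_nat (m + 1))) by lia.
      rewrite Z.pow_succ_r by lia. ring.
    - intros k _. unfold G1. rewrite sgn_S.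
      destruct (Nat.leb_spec (2 * S k) (m + 1)) as [H|H].
      + replace (Z.of_nat (m - 2 * k)) with (Z.succ (Z.of_nat (m + 1 - 2 * S k))) by lia.
        rewrite Z.pow_succ_r by lia. ring.
      + rewrite lucas_term_small by lia. ring. }
  rewrite A1, A2, !Hdrop; [ring| |];
    intros k Hk; unfold G1, G2; rewrite lucas_term_small by lia; ring.
Qed.

Lemma lucas_1 y : lucas 1 y = y.
Proof.
  unfold lucas. rewrite !sumZ_S, lucas_term_0, (lucas_term_small 1 1) by lia.
  change (sgn 0) with 1. simpl (Z.of_nat _). simpl sumZ. ring.
Qed.

Lemma lucas_2 y : lucas 2 y = y * y - 2.
Proof.
  unfold lucas. rewrite !sumZ_S, lucas_term_0, (lucas_term_small 2 2) by lia.
  change (lucas_term 2 1) with 2%nat. change (sgn 0) with 1. change (sgn 1) with (-1).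
  simpl (Z.of_nat _). simpl sumZ. ring.
Qed.

Lemma chebT_lucas m x : (1 <= m)%nat -> 2 * chebT m x = lucas m (2 * x).
Proof.
  intros Hm. destruct m as [|m]; [lia|].
  assert (H : forall n, 2 * chebT (S n) x = lucas (S n) (2 * x) /\
                        2 * chebT (S (S n)) x = lucas (S (S n)) (2 * x)).
  { induction n as [|n [H1 H2]].
    - rewrite lucas_1, lucas_2, !chebT_S, !chebU_S, chebT_0, chebU_0. split; ring.
    - split; [exact H2|].
      replace (S (S (S n))) with (S n + 2)%nat by lia. rewrite lucas_SS by lia.
      replace (S n + 1)%nat with (S (S n)) by lia. rewrite <- H1, <- H2.
      replace (S n + 2)%nat with (S (S (S n))) by lia. rewrite chebT_SS. ring. }
  apply H.
Qed.

Lemma lucas_coef_absorb m k : (1 <= m)%nat -> (2 * k <= m)%nat ->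
  (m * binom (m - k) k = (m - k) * lucas_coef (m - k) k)%nat.
Proof.
  intros H1 H2. unfold lucas_coef. destruct k as [|k]; [rewrite Nat.sub_0_r; lia|].
  remember (m - S k)%nat as N. destruct N as [|n]; [lia|].
  replace (S n - 1)%nat with n by lia.
  replace m with (S n + S k)%nat at 1 by lia.
  pose proof (binom_absorb n k). nia.
Qed.

Lemma cheb_coef_lucas m k x : (1 <= m)%nat -> (2 * k <= m)%nat ->
  2 * (cheb_coef m k * x ^ Z.of_nat (m - 2 * k))
  = sgn k * Z.of_nat (lucas_term m k) * (2 * x) ^ Z.of_nat (m - 2 * k).
Proof.
  intros H1 H2. unfold cheb_coef, lucas_term.
  destruct (Nat.leb_spec (2 * k) m) as [_|H]; [|lia].
  assert (Hnum : Z.of_nat m * Z.of_nat (binom (m - k) k)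
                 = Z.of_nat (m - k) * Z.of_nat (lucas_coef (m - k) k))
    by (rewrite <- !Nat2Z.inj_mul; f_equal; apply lucas_coef_absorb; auto).
  rewrite Hnum, Z.pow_mul_l. fold (sgn k).
  assert (Hmk : 0 < Z.of_nat (m - k)) by lia.
  destruct (Nat.eq_dec (m - 2 * k) 0) as [E|E].
  - assert (He : lucas_coef (m - k) k = 2%nat).
    { replace (m - k)%nat with k by lia. unfold lucas_coef. destruct k; [lia|].
      replace (S k - 1)%nat with k by lia. rewrite !binom_diag. reflexivity. }
    rewrite E, He. change (pw 0) with 1. simpl (Z.of_nat 0). change (Z.of_nat 2) with 2.
    replace (Z.of_nat (m - k) * 2 * 1) with (1 * (2 * Z.of_nat (m - k))) by ring.
    rewrite Z.div_mul by lia. ring.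
  - change (2 ^ Z.of_nat (m - 2 * k)) with (pw (m - 2 * k)). rewrite (pw_pred (m - 2 * k)) by lia.
    replace (Z.of_nat (m - k) * Z.of_nat (lucas_coef (m - k) k) * (2 * pw (m - 2 * k - 1)))
      with (Z.of_nat (lucas_coef (m - k) k) * pw (m - 2 * k - 1) * (2 * Z.of_nat (m - k))) by ring.
    rewrite Z.div_mul by lia. ring.
Qed.

Definition cheb_Z (m : nat) (x : Z) : Z :=
  fold_right (fun k acc => cheb_coef m k * x ^ Z.of_nat (m - 2 * k) + acc) 0 (seq 0 (S (Nat.div2 m))).

Lemma cheb_Z_chebT m x : (1 <= m)%nat -> cheb_Z m x = chebT m x.
Proof.
  intros Hm. apply (Z.mul_reg_l _ _ 2); [lia|].
  rewrite chebT_lucas by exact Hm. unfold cheb_Z, lucas.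
  rewrite fold_seq_sumZ, <- sumZ_scal.
  pose proof (Nat.div2_odd m).
  assert (Nat.b2n (Nat.odd m) <= 1)%nat by (destruct (Nat.odd m); simpl; lia).
  rewrite (sumZ_ext _ (fun k => sgn k * Z.of_nat (lucas_term m k) * (2 * x) ^ Z.of_nat (m - 2 * k)))
    by (intros k Hk; apply cheb_coef_lucas; lia).
  replace (S m) with (S (Nat.div2 m) + (m - Nat.div2 m))%nat by lia.
  symmetry. apply sumZ_pad. intros k Hk. rewrite lucas_term_small by lia. ring.
Qed.

(** * Transfer to the 2-adic integers *)

Lemma Z2_compat x j n : is_Z2 x -> (j <= n)%nat -> x n mod pw j = x j.
Proof.
  intros Hx Hjn. induction Hjn as [|n Hjn IH].
  - apply Z.mod_small, Hx.
  - rewrite <- (mod_pw_pw _ j n), (proj2 (Hx n)) by exact Hjn. exact IH.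
Qed.

Lemma Z2_compat_divide x j n : is_Z2 x -> (j <= n)%nat -> (pw j | x n - x j).
Proof.
  intros Hx H. apply divide_of_mod_eq; [apply pw_neq0|].
  rewrite Z2_compat, Z.mod_small by (auto; apply Hx). reflexivity.
Qed.

Lemma Z2pow_eval X j N : Z2pow X j N = (X N) ^ Z.of_nat j mod pw N.
Proof.
  induction j as [|j IH]; [reflexivity|].
  simpl Z2pow. unfold Z2mul. rewrite IH, Zmult_mod_idemp_r, Nat2Z.inj_succ, Z.pow_succ_r by lia.
  reflexivity.
Qed.

Lemma fold_Z2add_eval (F : nat -> Z2) (G : nat -> Z) N l : (forall k, F k N = G k mod pw N) ->
  fold_right (fun k acc => Z2add (F k) acc) (Z2c 0) l N
  = fold_right (fun k acc => G k + acc) 0 l mod pw N.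
Proof.
  intros H. induction l as [|k l IH]; [reflexivity|].
  simpl fold_right. unfold Z2add at 1. rewrite H, IH, Zplus_mod_idemp_r, Zplus_mod_idemp_l.
  reflexivity.
Qed.

Lemma cheb_eval m X N : (1 <= m)%nat -> cheb m X N = chebT m (X N) mod pw N.
Proof.
  intros Hm. rewrite <- cheb_Z_chebT by exact Hm.
  apply fold_Z2add_eval. intros k.
  unfold Z2mul, Z2c. rewrite Z2pow_eval, Zmult_mod_idemp_r, Zmult_mod_idemp_l. reflexivity.
Qed.

Lemma cheb_Z2c m c n : (1 <= m)%nat -> cheb m (Z2c c) n = chebT m c mod pw n.
Proof.
  intros Hm. rewrite cheb_eval by exact Hm.
  apply mod_eq_of_divide, chebT_cong, divide_mod_sub, pw_neq0.
Qed.

Lemma cheb_is_Z2 m X : (1 <= m)%nat -> is_Z2 X -> is_Z2 (cheb m X).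
Proof.
  intros Hm HX n. rewrite !cheb_eval by exact Hm. split.
  - apply Z.mod_pos_bound, pw_pos.
  - rewrite mod_pw_pw by lia. apply mod_eq_of_divide, chebT_cong, Z2_compat_divide; auto.
Qed.

Lemma iter_cheb_eval m X N k : (1 <= m)%nat -> is_Z2 X ->
  Defs.iter k (cheb m) X N = Nat.iter k (chebT m) (X N) mod pw N.
Proof.
  intros Hm HX. unfold Defs.iter. induction k as [|k IH].
  - symmetry. apply Z.mod_small, HX.
  - rewrite !Nat.iter_succ, cheb_eval, IH by exact Hm.
    apply mod_eq_of_divide, chebT_cong, divide_mod_sub, pw_neq0.
Qed.

Lemma in_coset_iff a K x : is_Z2 x -> (in_coset a K x <-> x K = a mod pw K).
Proof.
  intros Hx. pose proof (pw_pos K) as HP. split.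
  - intros [y [Hy E]]. rewrite (E K). unfold Z2add, Z2mul, Z2c.
    rewrite Z.mod_same, Z.mul_0_l, Z.mod_0_l, Z.add_0_r by lia. apply Z.mod_mod. lia.
  - intros HK. set (P := pw K) in *.
    set (u := fun n => (x (n + K)%nat - a) / P).
    assert (Hu : forall n, x (n + K)%nat - a = P * u n).
    { intros n. apply Zdivide_Zdiv_eq; [lia|].
      apply divide_of_mod_eq; [lia|]. unfold P. rewrite Z2_compat by (auto; lia). exact HK. }
    clearbody u.
    exists (fun n => u n mod pw n). split.
    + intros n. split; [apply Z.mod_pos_bound, pw_pos|].
      rewrite mod_pw_pw by lia. apply mod_eq_of_divide.
      apply (Z.mul_divide_cancel_r _ _ P); [lia|].
      replace ((u (S n) - u n) * P) with (x (S n + K)%nat - x (n + K)%nat)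
        by (pose proof (Hu n); pose proof (Hu (S n)); nia).
      unfold P. rewrite <- pw_add. apply Z2_compat_divide; auto. lia.
    + intros n. unfold Z2add, Z2mul, Z2c.
      rewrite Zmult_mod_idemp_l, Zplus_mod_idemp_l, Zplus_mod_idemp_r.
      rewrite <- (Z.mod_small (x n) (pw n)) at 1 by apply Hx.
      apply mod_eq_of_divide. fold P.
      pose proof (Z2_compat_divide x n (n + K) Hx ltac:(lia)) as H1.
      pose proof (divide_mod_sub (pw n) (u n) (pw_neq0 n)) as H2.
      replace (x n - (a + P * (u n mod pw n)))
        with ((x (n + K)%nat - x n) * (-1) + P * (u n mod pw n - u n) * (-1))
        by (pose proof (Hu n); lia).
      apply Z.divide_add_r; apply Z.divide_mul_l; [exact H1 | apply Z.divide_mul_r, H2].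
Qed.

(** * Dynamics of [T_m] on the cosets *)

Lemma odd_ge1 m : Nat.odd m = true -> (1 <= m)%nat.
Proof. destruct m; [discriminate | lia]. Qed.

Section ChebCoset.

Variables (m : nat) (a : Z) (K : nat).
Hypothesis m_odd : Nat.odd m = true.
Hypothesis K_ge3 : (3 <= K)%nat.
Hypothesis displacement : exists o, chebT m a - a = pw K * (2 * o + 1).

Lemma cheb_coset_invariant : invariant (cheb m) (in_coset a K).
Proof.
  pose proof (odd_ge1 m m_odd) as Hm.
  intros x Hx Hin. apply in_coset_iff in Hin; [|exact Hx].
  apply in_coset_iff; [apply cheb_is_Z2; auto|].
  rewrite cheb_eval by exact Hm. apply mod_eq_of_divide.
  apply (coset_invariant _ _ a K (taylor_chebT m) displacement).
  apply divide_of_mod_eq; [apply pw_neq0|]. rewrite Hin, Z.mod_mod by apply pw_neq0. reflexivity.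
Qed.

(* Approximate [x] and [y] at level [N + K]; the orbit of the approximation of [x]
   reaches that of [y] mod [2^N], and iterates respect congruences. *)
Lemma cheb_coset_minimal : minimal_on (cheb m) (in_coset a K).
Proof.
  pose proof (odd_ge1 m m_odd) as Hm.
  intros x y Hx Hy Hinx Hiny N.
  apply in_coset_iff in Hinx, Hiny; auto.
  assert (Happrox : forall z, is_Z2 z -> z K = a mod pw K -> (pw K | z (N + K)%nat - a)).
  { intros z Hz HzK. apply divide_of_mod_eq; [apply pw_neq0|]. rewrite Z2_compat by (auto; lia). exact HzK. }
  destruct (coset_transitive _ _ a K (taylor_chebT m) (dchebT_one_mod4 m m_odd) K_ge3 displacement
              _ _ N (Happrox x Hx Hinx) (Happrox y Hy Hiny)) as [k Hk].
  exists k. rewrite iter_cheb_eval, <- (Z2_compat y N (N + K)) by (auto; lia).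
  apply mod_eq_of_divide.
  assert (Hcong : (pw N | Nat.iter k (chebT m) (x (N + K)%nat) - Nat.iter k (chebT m) (x N)))
    by (apply (iter_cong _ _ (taylor_chebT m)), Z2_compat_divide; auto; lia).
  replace (Nat.iter k (chebT m) (x N) - y (N + K)%nat)
    with ((Nat.iter k (chebT m) (x (N + K)%nat) - y (N + K)%nat)
          - (Nat.iter k (chebT m) (x (N + K)%nat) - Nat.iter k (chebT m) (x N))) by ring.
  apply Z.divide_sub_r; assumption.
Qed.

End ChebCoset.

Lemma odd_mul a b : (exists u, a = 2 * u + 1) -> (exists v, b = 2 * v + 1) -> exists w, a * b = 2 * w + 1.
Proof. intros [u ->] [v ->]. exists (2 * u * v + u + v). ring. Qed.

Lemma chebT_displacement m s q a v : (2 <= s)%nat -> Nat.odd q = true ->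
  (m = 2 ^ s * q + 1 \/ m + 1 = 2 ^ s * q)%nat ->
  (exists o, a * (a * a - 1) = pw v * (2 * o + 1)) ->
  exists o, chebT m a - a = pw (v + s) * (2 * o + 1).
Proof.
  intros Hs Hq Hm [o Ho]. destruct (chebT_sub_self m s q a Hs Hq Hm) as [w ->].
  destruct (odd_mul (2 * o + 1) (2 * w + 1)) as [o' Ho']; [exists o; ring | exists w; ring |].
  exists o'. rewrite pw_add, <- Ho'.
  transitivity (pw s * (a * (a * a - 1)) * (2 * w + 1)); [ring | rewrite Ho; ring].
Qed.

Lemma cell0_valuation n u a : (1 <= n)%nat -> a = pw n * (1 + 2 * u) ->
  exists o, a * (a * a - 1) = pw n * (2 * o + 1).
Proof.
  intros Hn ->. rewrite (pw_pred n) by exact Hn. set (P := pw (n - 1)).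
  exists (2 * P * P * (1 + 2 * u) ^ 3 - u - 1). ring.
Qed.

(* [a^2 - 1 = (a - e)(a + e)] with [a - e = 2^n * odd] and [a + e = 2 * odd]. *)
Lemma cell1_valuation e n u a : (2 <= n)%nat -> (e = 1 \/ e = -1) -> a = e + pw n * (1 + 2 * u) ->
  exists o, a * (a * a - 1) = pw (n + 1) * (2 * o + 1).
Proof.
  intros Hn He ->.
  replace n with (2 + (n - 2))%nat by lia. rewrite Nat.add_comm, !pw_add.
  change (pw 2) with 4. change (pw 1) with 2. set (P := pw (n - 2)). set (U := 1 + 2 * u).
  destruct (odd_mul U ((e + 4 * P * U) * (e + 2 * P * U))) as [o Ho]; [exists u; unfold U; ring | |].
  - apply odd_mul; destruct He as [-> | ->];
      [exists (2 * P * U) | exists (2 * P * U - 1) | exists (P * U) | exists (P * U - 1)]; ring.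
  - exists o. rewrite <- Ho. destruct He as [-> | ->]; ring.
Qed.

(** * The decomposition of Z_2 *)

(* [c + 2^n (1 + 2 i) + 2^(n + M) Z_2]; the pieces [E1], [E2], [E3] are the cells
   around [c = 0, 1, -1]. *)
Definition in_cell (c : Z) (n i M : nat) (x : Z2) : Prop :=
  in_coset (c + pw n * (1 + 2 * Z.of_nat i)) (n + M) x.

Lemma first_failure (P : nat -> Prop) : P O -> (exists j, ~ P j) -> exists n, P n /\ ~ P (S n).
Proof.
  intros H0 [j Hj]. induction j as [|j IH]; [contradiction|].
  destruct (classic (P j)) as [Hp|Hp]; [exists j | apply IH]; auto.
Qed.

Section Cells.

Variables (c : Z) (M : nat) (x : Z2).
Hypothesis x_Z2 : is_Z2 x.

Lemma in_cell_iff n i :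
  in_cell c n i M x <-> x (n + M)%nat = (c + pw n * (1 + 2 * Z.of_nat i)) mod pw (n + M).
Proof. apply in_coset_iff, x_Z2. Qed.

Lemma in_cell_below n i j : in_cell c n i M x -> (j <= n)%nat -> x j = c mod pw j.
Proof.
  intros Hin Hj. apply in_cell_iff in Hin.
  rewrite <- (Z2_compat x j (n + M)), Hin, mod_pw_pw by (auto; lia).
  apply mod_eq_of_divide. rewrite Z.add_simpl_l.
  apply Z.divide_mul_l, pw_divide, Hj.
Qed.

Hypothesis M_pos : (1 <= M)%nat.

Lemma in_cell_level n i : in_cell c n i M x -> x (S n) = (c + pw n) mod pw (S n).
Proof.
  intros Hin. apply in_cell_iff in Hin.
  rewrite <- (Z2_compat x (S n) (n + M)), Hin, mod_pw_pw by (auto; lia).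
  apply mod_eq_of_divide. rewrite pw_S. exists (Z.of_nat i). ring.
Qed.

Lemma mod_add_pw_neq n : (c + pw n) mod pw (S n) <> c mod pw (S n).
Proof.
  intros H. apply divide_of_mod_eq in H; [|apply pw_neq0].
  rewrite pw_S, Z.add_simpl_l in H. destruct H as [k Hk].
  pose proof (pw_pos n). assert (E : pw n * (2 * k - 1) = 0) by lia.
  apply Z.mul_eq_0 in E. lia.
Qed.

Lemma in_cell_not_const n i : Z2eq x (Z2c c) -> ~ in_cell c n i M x.
Proof. intros Hc Hin. apply (mod_add_pw_neq n). rewrite <- (in_cell_level n i Hin). apply Hc. Qed.

Hypothesis c_small : -1 <= c <= 1.

Lemma cell_value_range n i : (1 <= n)%nat -> (i < 2 ^ (M - 1))%nat ->
  0 <= c + pw n * (1 + 2 * Z.of_nat i) < pw (n + M).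
Proof.
  intros Hn Hi. apply inj_lt in Hi. rewrite Z_of_nat_pow2 in Hi.
  rewrite pw_add, (pw_pred M), (pw_pred n) by lia.
  pose proof (pw_pos (n - 1)). pose proof (pw_pos (M - 1)). nia.
Qed.

Lemma in_cell_unique n n' i i' : (1 <= n)%nat -> (1 <= n')%nat ->
  (i < 2 ^ (M - 1))%nat -> (i' < 2 ^ (M - 1))%nat ->
  in_cell c n i M x -> in_cell c n' i' M x -> n = n' /\ i = i'.
Proof.
  intros Hn Hn' Hi Hi' H1 H2.
  destruct (Nat.lt_total n n') as [H|[<-|H]].
  - exfalso. apply (mod_add_pw_neq n). rewrite <- (in_cell_level n i H1).
    exact (in_cell_below n' i' (S n) H2 H).
  - split; [reflexivity|]. apply in_cell_iff in H1, H2. rewrite H1 in H2.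
    rewrite !Z.mod_small in H2 by (apply cell_value_range; auto).
    pose proof (pw_pos n). nia.
  - exfalso. apply (mod_add_pw_neq n'). rewrite <- (in_cell_level n' i' H2).
    exact (in_cell_below n i (S n') H1 H).
Qed.

(* If [x <> c], let [n] be the largest level with [x = c mod 2^n]: then [x] lies
   in the cell of level [n] indexed by the next [M - 1] binary digits. *)
Lemma in_cell_exists L : (1 <= L)%nat -> x L = c mod pw L ->
  Z2eq x (Z2c c) \/ exists n i, (L <= n)%nat /\ (i < 2 ^ (M - 1))%nat /\ in_cell c n i M x.
Proof.
  intros HL HxL. destruct (classic (Z2eq x (Z2c c))) as [H|H]; [left; exact H | right].
  assert (Hle : forall j, (j <= L)%nat -> x j = c mod pw j).
  { intros j Hj. rewrite <- (Z2_compat x j L), HxL by auto. apply mod_pw_pw, Hj. }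
  destruct (first_failure (fun j => x j = c mod pw j)) as [n [Hn HSn]];
    [apply Hle; lia | apply not_all_ex_not, H |].
  assert (HnL : (L <= n)%nat) by (destruct (Nat.le_gt_cases L n); [auto | exfalso; apply HSn, Hle; lia]).
  set (z := x (n + M)%nat).
  assert (Hz : (pw n | z - c)).
  { apply divide_of_mod_eq; [apply pw_neq0|]. unfold z. rewrite Z2_compat by (auto; lia). exact Hn. }
  destruct Hz as [w Hw], (Z.Even_or_Odd w) as [[w' Hw']|[w' Hw']].
  - exfalso. apply HSn. rewrite <- (Z2_compat x (S n) (n + M)) by (auto; lia). fold z.
    apply mod_eq_of_divide. rewrite pw_S. exists w'. lia.
  - assert (Hzr : 0 <= z < pw (n + M)) by apply x_Z2.
    rewrite pw_add, (pw_pred M) in Hzr by exact M_pos.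
    assert (Hpn : 2 <= pw n) by (rewrite (pw_pred n) by lia; pose proof (pw_pos (n - 1)); lia).
    pose proof (pw_pos (M - 1)).
    assert (Hw0 : 0 <= w') by nia. assert (Hw1 : w' < pw (M - 1)) by nia.
    exists n, (Z.to_nat w'). repeat split; [exact HnL | |].
    + apply Nat2Z.inj_lt. rewrite Z2Nat.id, Z_of_nat_pow2 by lia. exact Hw1.
    + apply in_cell_iff. fold z. rewrite Z2Nat.id by lia.
      rewrite <- (Z.mod_small z (pw (n + M))) by apply x_Z2. f_equal. lia.
Qed.

End Cells.

Lemma in_piece_E1 s n i x : in_piece s (E1 n i) x <-> in_cell 0 n i s x.
Proof. reflexivity. Qed.

Lemma in_piece_E2 s n i x : in_piece s (E2 n i) x <-> in_cell 1 n i (s + 1) x.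
Proof. unfold in_cell. simpl. rewrite Nat.add_assoc. reflexivity. Qed.

Lemma in_piece_E3 s n i x : in_piece s (E3 n i) x <-> in_cell (-1) n i (s + 1) x.
Proof. unfold in_cell. simpl. rewrite Nat.add_assoc. reflexivity. Qed.

Definition piece_center (p : piece) : Z :=
  match p with Pt0 | E1 _ _ => 0 | Pt1 | E2 _ _ => 1 | PtM1 | E3 _ _ => -1 end.

(* The center in [{0, 1, -1}] of the pieces containing [x], read off [x mod 4]. *)
Definition center_mod4 (r : Z) : Z := if r mod 2 =? 0 then 0 else if r =? 1 then 1 else -1.

Lemma piece_center_mod4 s p x : is_Z2 x -> piece_valid s p -> in_piece s p x ->
  piece_center p = center_mod4 (x 2%nat).
Proof.
  intros Hx Hv Hin.
  assert (Hmod2 : x 2%nat mod 2 = x 1%nat) by exact (Z2_compat x 1 2 Hx ltac:(lia)).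
  destruct p as [| | |n i|n i|n i]; simpl in Hv.
  - rewrite (Hin 2%nat). reflexivity.
  - rewrite (Hin 2%nat). reflexivity.
  - rewrite (Hin 2%nat). reflexivity.
  - unfold center_mod4. rewrite Hmod2, (in_cell_below 0 s x Hx n i 1) by (auto; lia). reflexivity.
  - apply in_piece_E2 in Hin. rewrite (in_cell_below 1 (s + 1) x Hx n i 2) by (auto; lia). reflexivity.
  - apply in_piece_E3 in Hin. rewrite (in_cell_below (-1) (s + 1) x Hx n i 2) by (auto; lia). reflexivity.
Qed.

Lemma piece_unique s p q x : is_Z2 x -> (2 <= s)%nat -> piece_valid s p -> piece_valid s q ->
  in_piece s p x -> in_piece s q x -> q = p.
Proof.
  intros Hx Hs Hp Hq H1 H2.
  assert (Hc : piece_center p = piece_center q)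
    by (rewrite !(piece_center_mod4 s _ x Hx); auto).
  destruct p as [| | |n i|n i|n i], q as [| | |n' i'|n' i'|n' i']; simpl in Hc;
    try discriminate; try reflexivity; simpl in Hp, Hq;
    repeat match goal with
           | H : in_piece _ (E1 _ _) _ |- _ => apply in_piece_E1 in H
           | H : in_piece _ (E2 _ _) _ |- _ => apply in_piece_E2 in H
           | H : in_piece _ (E3 _ _) _ |- _ => apply in_piece_E3 in H
           end.
  all: try (exfalso; eapply in_cell_not_const; [exact Hx | | eassumption | eassumption]; lia).
  - destruct (in_cell_unique 0 s x Hx ltac:(lia) ltac:(lia) n' n i' i) as [-> ->]; auto; lia.
  - destruct (in_cell_unique 1 (s + 1) x Hx ltac:(lia) ltac:(lia) n' n i' i) as [-> ->];
      rewrite ?Nat.add_sub; auto; lia.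
  - destruct (in_cell_unique (-1) (s + 1) x Hx ltac:(lia) ltac:(lia) n' n i' i) as [-> ->];
      rewrite ?Nat.add_sub; auto; lia.
Qed.

Lemma piece_exists s x : is_Z2 x -> (2 <= s)%nat -> exists p, piece_valid s p /\ in_piece s p x.
Proof.
  intros Hx Hs.
  assert (R1 : 0 <= x 1%nat < 2) by apply Hx.
  assert (R2 : 0 <= x 2%nat < 4) by apply Hx.
  pose proof (Z2_compat x 1 2 Hx ltac:(lia)) as Hc. change (pw 1) with 2 in Hc.
  destruct (Z.eq_dec (x 1%nat) 0) as [H1|H1].
  - destruct (in_cell_exists 0 s x Hx ltac:(lia) ltac:(lia) 1 ltac:(lia) ltac:(rewrite H1; reflexivity))
      as [H|[n [i [Hn [Hi HE]]]]].
    + exists Pt0. split; [exact I | exact H].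
    + exists (E1 n i). split; [simpl; lia | exact HE].
  - assert (H2 : x 2%nat = 1 \/ x 2%nat = 3).
    { assert (x 2%nat = 1 \/ x 2%nat = 3 \/ x 2%nat = 0 \/ x 2%nat = 2) as [H|[H|[H|H]]] by lia;
        auto; rewrite H in Hc; vm_compute in Hc; lia. }
    destruct H2 as [H2|H2];
      [ destruct (in_cell_exists 1 (s + 1) x Hx ltac:(lia) ltac:(lia) 2 ltac:(lia)
                    ltac:(rewrite H2; reflexivity)) as [H|[n [i [Hn [Hi HE]]]]]
      | destruct (in_cell_exists (-1) (s + 1) x Hx ltac:(lia) ltac:(lia) 2 ltac:(lia)
                    ltac:(rewrite H2; reflexivity)) as [H|[n [i [Hn [Hi HE]]]]] ];
      try rewrite Nat.add_sub in Hi.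
    + exists Pt1. split; [exact I | exact H].
    + exists (E2 n i). split; [simpl; lia | apply in_piece_E2, HE].
    + exists PtM1. split; [exact I | exact H].
    + exists (E3 n i). split; [simpl; lia | apply in_piece_E3, HE].
Qed.

Lemma piece_dynamics m s p : Nat.odd m = true -> is_s m s -> piece_valid s p ->
  match p with
  | Pt0 | Pt1 | PtM1 => True
  | _ => invariant (cheb m) (in_piece s p) /\ minimal_on (cheb m) (in_piece s p)
  end.
Proof.
  intros Hm Hs Hv. pose proof (proj1 Hs) as Hs2.
  destruct (is_s_cofactor m s Hs) as [q [Hq Hmq]].
  assert (Hdyn : forall a v K, (exists o, a * (a * a - 1) = pw v * (2 * o + 1)) ->
     K = (v + s)%nat -> (3 <= K)%nat ->
     invariant (cheb m) (in_coset a K) /\ minimal_on (cheb m) (in_coset a K)).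
  { intros a v K Hval -> HK.
    pose proof (chebT_displacement m s q a v Hs2 Hq Hmq Hval).
    split; [apply cheb_coset_invariant | apply cheb_coset_minimal]; auto. }
  destruct p as [| | |n i|n i|n i]; auto; simpl in Hv; destruct Hv as [Hn Hi].
  - apply (Hdyn _ n); [apply (cell0_valuation n (Z.of_nat i)); auto | lia | lia].
  - apply (Hdyn _ (n + 1)%nat); [apply (cell1_valuation 1 n (Z.of_nat i)); auto | lia | lia].
  - apply (Hdyn _ (n + 1)%nat); [apply (cell1_valuation (-1) n (Z.of_nat i)); auto | lia | lia].
Qed.

(** * Even degree *)

Lemma cheb_deriv_at1_even m : Nat.even m = true -> Z.abs (cheb_deriv_at m 1) mod 2 = 0.
Proof.
  intros He. apply Nat.even_spec in He. destruct He as [h Hh].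
  apply Z.mod_divide; [lia|]. apply Z.divide_abs_r.
  unfold cheb_deriv_at. induction (seq 0 (S (Nat.div2 m))) as [|k l IH]; [exists 0; reflexivity|].
  simpl fold_right. apply Z.divide_add_r; [|exact IH].
  apply Z.divide_mul_l, Z.divide_mul_r. exists (Z.of_nat (h - k)). lia.
Qed.

(* [T_m] maps [Z] into the odd integers, and near [1] it contracts:
   [T_m(1 + 2^k c) = 1 + 2^k c m^2 + 2^(2k) r] with [m^2] divisible by 4. *)
Lemma chebT_even_iter m y k : Nat.even m = true -> (1 <= k)%nat ->
  (pw k | Nat.iter k (chebT m) y - 1).
Proof.
  intros He Hk. apply Nat.even_spec in He. destruct He as [h ->].
  induction k as [|[|k] IH]; [lia| |].
  - destruct (chebT_even_odd h y) as [a Ha]. cbn [Nat.iter nat_rect]. rewrite Ha. exists a. change (pw 1) with 2. ring.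
  - rewrite Nat.iter_succ. destruct IH as [c Hc]; [lia|].
    replace (Nat.iter (S k) (chebT (2 * h)) y) with (1 + c * pw (S k)) by lia.
    destruct (taylor_chebT (2 * h) 1 (c * pw (S k))) as [r ->].
    unfold dchebT. destruct (cheb_at1 (2 * h)) as [-> ->].
    rewrite !pw_S, Nat2Z.inj_mul.
    exists (2 * c * (Z.of_nat h * Z.of_nat h) + c * c * pw k * r). ring.
Qed.

Lemma cheb_even_converges m x : (1 <= m)%nat -> Nat.even m = true -> is_Z2 x ->
  converges_to (cheb m) x (Z2c 1).
Proof.
  intros Hm He Hx N. exists (S N). intros k Hk.
  rewrite iter_cheb_eval by auto. apply mod_eq_of_divide.
  apply (Z.divide_trans _ (pw k)); [apply pw_divide; lia | apply chebT_even_iter; auto; lia].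
Qed.

Theorem theorem2 (m : nat) (hm : (2 <= m)%nat) :
  (Nat.even m = true ->
     Z2eq (cheb m (Z2c 1)) (Z2c 1) /\
     Z.abs (cheb_deriv_at m 1) mod 2 = 0 /\
     (forall x : Z2, is_Z2 x -> converges_to (cheb m) x (Z2c 1)))
  /\
  (Nat.odd m = true -> forall s : nat, is_s m s ->
     (forall x : Z2, is_Z2 x ->
        exists p : piece, (piece_valid s p /\ in_piece s p x) /\
          forall q : piece, piece_valid s q -> in_piece s q x -> q = p)
     /\ Z2eq (cheb m (Z2c 0)) (Z2c 0)
     /\ Z2eq (cheb m (Z2c 1)) (Z2c 1)
     /\ Z2eq (cheb m (Z2c (-1))) (Z2c (-1))
     /\ (forall p : piece, piece_valid s p ->
          match p with
          | Pt0 | Pt1 | PtM1 => True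
          | _ => invariant (cheb m) (in_piece s p) /\ minimal_on (cheb m) (in_piece s p)
          end)).
Proof.
  assert (Hm1 : (1 <= m)%nat) by lia.
  assert (Hfix1 : Z2eq (cheb m (Z2c 1)) (Z2c 1))
    by (intros n; rewrite cheb_Z2c, (proj1 (cheb_at1 m)) by exact Hm1; reflexivity).
  split.
  - intros He. repeat split; auto using cheb_deriv_at1_even, cheb_even_converges.
  - intros Ho s Hs.
    destruct (proj1 (Nat.odd_spec m) Ho) as [j Hj].
    split; [|split; [|split; [exact Hfix1 | split]]].
    + intros x Hx. destruct (piece_exists s x Hx (proj1 Hs)) as [p Hp].
      exists p. split; [exact Hp|]. intros q Hq Hin. apply (piece_unique s p q x Hx (proj1 Hs)); tauto.
    + intros n. rewrite cheb_Z2c, Hj, chebT_odd_at0 by lia. reflexivity.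
    + intros n. rewrite cheb_Z2c, Hj, chebT_odd_atm1 by lia. reflexivity.
    + intros p Hp. apply piece_dynamics; auto.
Qed.
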